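(* Let $V$ be the space of real symmetric $d\times d$ matrices, and let $\mathfrak{S}_d$ act on $V$ by simultaneous permutation of rows and columns, $X\mapsto PXP^\top$ for permutation matrices $P$. If $d\ge 2m$, then $\dim(\mathbb{R}[V]_m^{\mathfrak{S}_d})$ is independent of $d$ and satisfies $$\dim\big(\mathbb{R}[V]_m^{\mathfrak{S}_d}\big)\le\sum_{j=0}^m\sum_{\alpha\vdash 2j}q_\alpha.$$
   Context: $\mathbb{R}[V]_m$ denotes the real polynomials on $V$ of total degree at most $m$, and $\mathbb{R}[V]_m^{G}$ the subspace of $G$-invariant ones. $\alpha\vdash 2j$ means $\alpha$ is a partition of $2j$ (non-increasing sequence of positive integers summing to $2j$). For a partition $\alpha$ with $\ell$ parts, $q_\alpha$ is the number of symmetric $\ell\times\ell$ matrices with nonnegative integer entries whose vector of row sums equals $\alpha$. *)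

From HB Require Import structures.
From mathcomp Require Import all_boot all_order all_algebra all_fingroup.
Set Implicit Arguments. Unset Strict Implicit. Unset Printing Implicit Defensive.
Import Order.TTheory GRing.Theory Num.Theory.
Local Open Scope ring_scope.

(* Coordinates of V = Sym_d(R): the entries X_ij with i <= j. *)
Definition UT (d : nat) := {p : 'I_d * 'I_d | (p.1 <= p.2)%N}.

Definition Mon (d m : nat) :=
  {mu : {ffun UT d -> 'I_m.+1} | (\sum_(k : UT d) (mu k : nat) <= m)%N}.

(* R[V]_m, represented by coefficient vectors over the monomials of degree <= m. *)
Definition PolyV (R : realFieldType) (d m : nat) := {ffun Mon d m -> R^o}.

Definition polyEval (R : realFieldType) (d m : nat) (c : PolyV R d m)
    (X : 'M[R]_d) : R :=
  \sum_(mu : Mon d m) (c mu : R) *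
     \prod_(k : UT d) (X (val k).1 (val k).2) ^+ (val mu k : nat).

Definition Sd_invariant (R : realFieldType) (d m : nat) (c : PolyV R d m) : Prop :=
  forall (s : 'S_d) (X : 'M[R]_d), X^T = X ->
    polyEval c (perm_mx s *m X *m (perm_mx s)^T) = polyEval c X.

Definition dimIs (R : fieldType) (vT : vectType R) (P : vT -> Prop) (k : nat) : Prop :=
  exists U : {vspace vT}, (forall v, v \in U <-> P v) /\ \dim U = k.

Definition is_partition (n : nat) (s : seq nat) : bool :=
  [&& sorted geq s, all (fun x => 0 < x)%N s & sumn s == n].

(* q_alpha: number of symmetric l x l matrices with nonnegative integer entries
   whose row sums are alpha (entries are bounded by sumn alpha). *)
Definition q_alpha (a : seq nat) : nat :=
  #|[set A : 'M['I_(sumn a).+1]_(size a) |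
      (A^T == A) && [forall i, (\sum_j (A i j : nat)) == nth 0 a i]]|.

(* sum over partitions alpha of n of q_alpha; a partition with l parts
   (l <= n, parts <= n) is enumerated exactly once as a function 'I_l -> 'I_n.+1. *)
Definition sum_q (n : nat) : nat :=
  \sum_(l < n.+1)
    \sum_(t : {ffun 'I_l -> 'I_n.+1} |
             is_partition n [seq (t i : nat) | i <- enum 'I_l])
      q_alpha [seq (t i : nat) | i <- enum 'I_l].

From HB Require Import structures.
From mathcomp Require Import all_boot all_order all_algebra all_fingroup.
From mathcomp Require Import zify.
Import Order.TTheory GRing.Theory Num.Theory.
Set Implicit Arguments. Unset Strict Implicit. Unset Printing Implicit Defensive.

(* An S_d-invariant polynomial is the same as a coefficient vector that is
   constant on the S_d-orbits of monomials, because evaluation on symmetric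
   matrices is injective (Kronecker substitution X_ij = t^((m+1)^r)).  Hence
   the dimension is the number of orbits of monomials of degree <= m in the
   entries X_ij, i <= j.  Such a monomial is a symmetric weight matrix W; its
   row degrees (X_ii counted twice) add up to 2 deg <= 2m, so once the rows are
   sorted by decreasing degree only the first 2m indices occur.  Padding with
   zero rows is therefore a bijection between the orbits in dimension 2m and in
   any dimension d >= 2m.  Finally the orbit of a sorted monomial of degree j
   is determined by the partition alpha of 2j formed by its nonzero row degrees
   and by the matrix W + diag W, which is symmetric with row sums alpha: there
   are at most q_alpha of them. *)

Lemma leq_sum_nat_term (F : nat -> nat) n k : k < n -> F k <= \sum_(0 <= j < n) F j.
Proof.
move=> hk; rewrite (@big_cat_nat _ _ _ k) ?(ltnW hk) //= [X in _ <= _ + X]big_ltn //.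
by rewrite addnCA leq_addr.
Qed.

Lemma sum_nat_trunc (F : nat -> nat) n d : n <= d -> (forall i, n <= i -> F i = 0) ->
  \sum_(0 <= i < d) F i = \sum_(0 <= i < n) F i.
Proof.
move=> hnd hF; rewrite (@big_cat_nat _ _ _ n 0 d) //= [X in _ + X]big1_seq ?addn0 //.
by move=> i /andP [_]; rewrite mem_index_iota => /andP [/hF].
Qed.

Lemma double_sum_nat_trunc (F : nat -> nat -> nat) n d : n <= d ->
  (forall i j, (n <= i) || (n <= j) -> F i j = 0) ->
  \sum_(0 <= i < d) \sum_(0 <= j < d) F i j + \sum_(0 <= i < d) F i i =
  \sum_(0 <= i < n) \sum_(0 <= j < n) F i j + \sum_(0 <= i < n) F i i.
Proof.
move=> hnd hF; congr (_ + _); last by apply: sum_nat_trunc => // i hi; rewrite hF ?hi.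
rewrite (sum_nat_trunc hnd) => [|i hi]; last by rewrite big1 // => j _; rewrite hF ?hi.
by apply: eq_bigr => i _; apply: sum_nat_trunc => // j hj; rewrite hF ?hj ?orbT.
Qed.

Lemma downward_closed_count (P : pred nat) d :
  (forall i j, i <= j -> P j -> P i) -> (forall i, d <= i -> ~~ P i) ->
  forall i, P i = (i < \sum_(0 <= j < d) P j).
Proof.
elim: d => [|d IH] down out i; first by rewrite big_geq // ltn0; apply/negbTE/out.
case: (boolP (P d)) => hd.
  have -> : \sum_(0 <= j < d.+1) P j = d.+1.
    rewrite -[in RHS](card_ord d.+1) -sum1_card big_mkord.
    by apply: eq_bigr => j _; rewrite (down j d) // -ltnS.
  case: (ltnP i d.+1) => hi; first by apply: down hd; rewrite -ltnS.
  by apply/negbTE/out.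
rewrite big_nat_recr //= (negbTE hd) addn0; apply: IH => // j hj.
by case: (ltngtP d j) => [h|h|<-] //; [apply: out | move: hj; rewrite leqNgt h].
Qed.

Lemma perm_of_prefix_map d l (f : nat -> nat) : l <= d ->
  (forall i, i < l -> f i < l) -> {in [pred i | i < l] &, injective f} ->
  exists s : 'S_d, forall i : 'I_d, val (s i) = if i < l then f i else i.
Proof.
move=> hl hf finj.
pose g (i : 'I_d) : 'I_d := if i < l then insubd i (f i) else i.
have gE i : val (g i) = if i < l then f i else i.
  by rewrite /g; case: ifP => // hi; rewrite val_insubd (leq_trans (hf _ hi) hl).
have ginj : injective g.
  move=> i j /(congr1 val); rewrite !gE => e; apply: val_inj => /=.
  case: ifP e => hi; case: ifP => hj e //.
  - exact: finj.
  - by move: (hf _ hi); rewrite e hj.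
  - by move: (hf _ hj); rewrite -e hi.
by exists (perm ginj) => i; rewrite permE gE.
Qed.

Lemma eq_inord n k (i : 'I_n.+1) : k <= n -> (inord k == i) = (k == i).
Proof. by move=> hk; rewrite -val_eqE /= inordK. Qed.

Lemma eq_digits (B N : nat) (a b : 'I_N -> nat) :
  (forall i, a i < B) -> (forall i, b i < B) ->
  \sum_(i < N) a i * B ^ i = \sum_(i < N) b i * B ^ i -> a =1 b.
Proof.
elim: N a b => [|N IH] a b ha hb + k; first by case: k.
have shift (c : 'I_N.+1 -> nat) : \sum_(i < N.+1) c i * B ^ i =
    c ord0 + B * \sum_(i < N) c (lift ord0 i) * B ^ i.
  rewrite big_ord_recl expn0 muln1 big_distrr; congr (_ + _).
  by apply: eq_bigr => i _; rewrite lift0 expnS /= mulnCA.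
rewrite !shift => e.
have e0 : a ord0 = b ord0.
  by have := congr1 (modn^~ B) e; rewrite !(addnC (_ ord0)) !(mulnC B) !modnMDl !modn_small.
have B_gt0 : 0 < B by apply: leq_ltn_trans (ha ord0).
move: e; rewrite e0 => /addnI /eqP; rewrite eqn_mul2l gtn_eqF //= => /eqP e.
case: (unliftP ord0 k) => [j ->|->] //.
exact: (IH (fun j => a (lift ord0 j)) (fun j => b (lift ord0 j))).
Qed.

Section PermNat.
Variables (d : nat) (s : 'S_d).

Definition permn (i : nat) : nat :=
  if (insub i : option 'I_d) is Some i' then val (s i') else i.

Lemma permn_ord (i : 'I_d) : permn i = s i.
Proof. by rewrite /permn valK. Qed.

Lemma permn_out i : d <= i -> permn i = i.
Proof. by rewrite /permn; case: insubP => // i' hi _; rewrite leqNgt hi. Qed.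

Lemma permn_lt i : (permn i < d) = (i < d).
Proof.
case: (ltnP i d) => hi; last by rewrite permn_out // ltnNge hi.
by rewrite -[i]/(val (Ordinal hi)) permn_ord ltn_ord.
Qed.

Lemma permn_inj : injective permn.
Proof.
move=> i j; case: (ltnP i d) => hi; case: (ltnP j d) => hj.
- rewrite -[i]/(val (Ordinal hi)) -[j]/(val (Ordinal hj)) !permn_ord.
  by move/val_inj/perm_inj => [].
- by rewrite (permn_out hj) => e; move: hi; rewrite -permn_lt e ltnNge hj.
- by rewrite (permn_out hi) => e; move: hj; rewrite -permn_lt -e ltnNge hi.
- by rewrite !permn_out.
Qed.

End PermNat.

Section ClassRepresentatives.
Variables (T : finType) (e : rel T).
Hypotheses (eR : reflexive e) (eS : symmetric e) (eT : transitive e).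

Definition class_rep (x : T) : T := [arg min_(y < x | e x y) enum_rank y].

Lemma class_repP x : e x (class_rep x).
Proof. by rewrite /class_rep; case: arg_minnP. Qed.

Lemma class_rep_eq x y : e x y -> class_rep x = class_rep y.
Proof.
have minP z z' : e z z' -> enum_rank (class_rep z) <= enum_rank z'.
  by rewrite /class_rep; case: arg_minnP => // ? _; apply.
move=> hxy; apply/enum_rank_inj/val_inj/eqP; rewrite eqn_leq.
by rewrite minP ?(eT hxy (class_repP y)) //= minP // (eT _ (class_repP x)) // eS.
Qed.

Definition class_reps : {set T} := [set class_rep x | x in T].

Lemma class_repK r : r \in class_reps -> class_rep r = r.
Proof. by case/imsetP => x _ ->; apply/esym/class_rep_eq/class_repP. Qed.

Lemma class_rep_in x : class_rep x \in class_reps.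
Proof. exact: imset_f. Qed.

End ClassRepresentatives.

Lemma card_class_reps_eq (T1 T2 : finType) (e1 : rel T1) (e2 : rel T2) (F : T1 -> T2) :
  reflexive e1 -> symmetric e1 -> transitive e1 ->
  reflexive e2 -> symmetric e2 -> transitive e2 ->
  (forall a b, e1 a b = e2 (F a) (F b)) -> (forall y, exists x, e2 y (F x)) ->
  #|class_reps e1| = #|class_reps e2|.
Proof.
move=> r1 s1 t1 r2 s2 t2 hF hs.
rewrite -(@card_in_imset _ _ (fun r => class_rep e2 (F r))).
  apply: eq_card => y; apply/imsetP/imsetP => [[r _ ->]|[x _ ->]].
    by exists (F r).
  have [z hz] := hs x; exists (class_rep e1 z); first exact: class_rep_in.
  by apply: class_rep_eq => //; apply: t2 hz _; rewrite -hF class_repP.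
move=> a b ha hb /= hab.
rewrite -(class_repK r1 s1 t1 ha) -(class_repK r1 s1 t1 hb); apply: class_rep_eq => //.
rewrite hF; apply: t2 (class_repP r2 (F a)) _.
by rewrite hab s2 class_repP.
Qed.

(** * Monomials on symmetric matrices and their orbits *)

Section UpperTriangle.
Variable d : nat.

Lemma ut_proof (i j : 'I_d) :
  ((if i <= j then (i, j) else (j, i)).1 <= (if i <= j then (i, j) else (j, i)).2).
Proof. by case: (leqP i j) => //= /ltnW. Qed.

Definition ut (i j : 'I_d) : UT d :=
  exist (fun p : 'I_d * 'I_d => p.1 <= p.2) _ (ut_proof i j).

Lemma utC (i j : 'I_d) : ut i j = ut j i.
Proof.
apply: val_inj => /=; case: (leqP i j) => hij; case: (leqP j i) => hji //.
- by have -> : i = j by apply/val_inj/eqP; rewrite eqn_leq hij hji.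
- by move: (ltn_trans hij hji); rewrite ltnn.
Qed.

Lemma utK (k : UT d) : ut (val k).1 (val k).2 = k.
Proof. by apply: val_inj => /=; rewrite (valP k); case: (val k). Qed.

Definition actUT (s : 'S_d) (k : UT d) : UT d := ut (s (val k).1) (s (val k).2).

Lemma actUT_ut (s : 'S_d) i j : actUT s (ut i j) = ut (s i) (s j).
Proof. by rewrite /actUT /=; case: leqP => //; rewrite utC. Qed.

Lemma actUTM (s t : 'S_d) k : actUT t (actUT s k) = actUT (s * t)%g k.
Proof. by rewrite -(utK k) !actUT_ut !permM. Qed.

Lemma actUT1 k : actUT 1%g k = k.
Proof. by rewrite /actUT !perm1 utK. Qed.

Lemma actUTKV (s : 'S_d) : cancel (actUT s^-1%g) (actUT s).
Proof. by move=> k; rewrite actUTM mulVg actUT1. Qed.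

Lemma actUT_inj (s : 'S_d) : injective (actUT s).
Proof. by apply: (can_inj (g := actUT s^-1%g)) => k; rewrite actUTM mulgV actUT1. Qed.

Lemma double_sum_UT (V : 'I_d -> 'I_d -> nat) : (forall i j, V i j = V j i) ->
  2 * \sum_(k : UT d) V (val k).1 (val k).2 =
  \sum_(i < d) \sum_(j < d) V i j + \sum_(i < d) V i i.
Proof.
move=> VC; have -> : \sum_(k : UT d) V (val k).1 (val k).2 =
    \sum_(p : 'I_d * 'I_d | p.1 <= p.2) V p.1 p.2.
  rewrite (reindex_omap (val : UT d -> 'I_d * 'I_d) insub) => [|p hp]; last first.
    by rewrite insubT.
  by apply: eq_bigl => k; rewrite (valP k) valK eqxx.
rewrite pair_big /= [in RHS](bigID (fun p : 'I_d * 'I_d => p.1 <= p.2)) /=.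
have -> : \sum_(p : 'I_d * 'I_d | ~~ (p.1 <= p.2)) V p.1 p.2 =
          \sum_(p : 'I_d * 'I_d | p.1 < p.2) V p.1 p.2.
  rewrite (reindex_inj (h := fun p : 'I_d * 'I_d => (p.2, p.1))); last first.
    by move=> [a b] [c e] [-> ->].
  by apply: eq_big => [p|p _] /=; rewrite ?ltnNge // VC.
rewrite (bigID (fun p : 'I_d * 'I_d => p.1 == p.2)) /=.
have -> : \sum_(p : 'I_d * 'I_d | (p.1 <= p.2) && ~~ (p.1 == p.2)) V p.1 p.2 =
          \sum_(p : 'I_d * 'I_d | p.1 < p.2) V p.1 p.2.
  by apply: eq_bigl => p; rewrite ltn_neqAle andbC.
have -> : \sum_(p : 'I_d * 'I_d | (p.1 <= p.2) && (p.1 == p.2)) V p.1 p.2 =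
          \sum_(i < d) V i i.
  rewrite (reindex_onto (fun i : 'I_d => (i, i)) (fun p => p.1)) /=; last first.
    by move=> [a b] /= /andP [_ /eqP ->].
  by apply: eq_bigl => i; rewrite leqnn !eqxx.
by rewrite mul2n -addnn -!addnA; congr (_ + (_ + _)); exact: addnC.
Qed.

End UpperTriangle.

Section Monomials.
Variables d m : nat.
Implicit Types mu a b : Mon d m.

Definition degM mu : nat := \sum_(k : UT d) (val mu k : nat).

Lemma degM_le mu : degM mu <= m.
Proof. exact: valP mu. Qed.

Lemma actM_proof (s : 'S_d) mu :
  \sum_(k : UT d) ([ffun k => val mu (actUT s k)] k : nat) <= m.
Proof.
rewrite (reindex_inj (@actUT_inj d s^-1%g)) /=.
by under eq_bigr do rewrite ffunE actUTKV; exact: degM_le.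
Qed.

Definition actM (s : 'S_d) mu : Mon d m :=
  exist (fun f : {ffun UT d -> 'I_m.+1} => \sum_k (f k : nat) <= m) _ (actM_proof s mu).

(* The exponent of X_ij in mu, for i, j : nat; it is 0 outside 'I_d, so that
   monomials in different dimensions can be compared. *)
Definition wt mu (i j : nat) : nat :=
  if (insub i : option 'I_d) is Some i' then
    if (insub j : option 'I_d) is Some j' then val mu (ut i' j') else 0
  else 0.

Lemma wt_ord mu (i j : 'I_d) : wt mu i j = val mu (ut i j).
Proof. by rewrite /wt !valK. Qed.

Lemma wt_out mu i j : (d <= i) || (d <= j) -> wt mu i j = 0.
Proof.
rewrite /wt; case: insubP => [i' hi _|//]; case: insubP => [j' hj _|//].
by rewrite leqNgt hi leqNgt hj.
Qed.

Lemma wtC mu i j : wt mu i j = wt mu j i.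
Proof.
case: (ltnP i d) => hi; last by rewrite !wt_out ?hi ?orbT.
case: (ltnP j d) => hj; last by rewrite !wt_out ?hj ?orbT.
by rewrite -[i]/(val (Ordinal hi)) -[j]/(val (Ordinal hj)) !wt_ord utC.
Qed.

Lemma wt_le mu i j : wt mu i j <= m.
Proof.
rewrite /wt; case: insub => // i'; case: insub => // j'.
by rewrite -ltnS ltn_ord.
Qed.

Lemma eq_wt a b : (forall i j : 'I_d, wt a i j = wt b i j) -> a = b.
Proof.
move=> h; apply/val_inj/ffunP => k; apply: val_inj.
by have := h (val k).1 (val k).2; rewrite !wt_ord utK.
Qed.

Lemma wt_act (s : 'S_d) mu (i j : 'I_d) : wt (actM s mu) i j = wt mu (s i) (s j).
Proof. by rewrite !wt_ord /= ffunE actUT_ut. Qed.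

Lemma wt_act_nat (s : 'S_d) mu i j : wt (actM s mu) i j = wt mu (permn s i) (permn s j).
Proof.
case: (ltnP i d) => hi; last by rewrite (permn_out s hi) !wt_out ?hi.
case: (ltnP j d) => hj; last by rewrite (permn_out s hj) !wt_out ?hj ?orbT.
by rewrite -[i]/(val (Ordinal hi)) -[j]/(val (Ordinal hj)) !permn_ord wt_act.
Qed.

Lemma actMM (s t : 'S_d) mu : actM s (actM t mu) = actM (s * t)%g mu.
Proof. by apply: eq_wt => i j; rewrite !wt_act !permM. Qed.

Lemma actM1 mu : actM 1%g mu = mu.
Proof. by apply: eq_wt => i j; rewrite !wt_act !perm1. Qed.

Lemma actM_inj (s : 'S_d) : injective (actM s).
Proof. by apply: (can_inj (g := actM s^-1%g)) => mu; rewrite actMM mulVg actM1. Qed.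

Definition conjM a b : bool := [exists s : 'S_d, actM s a == b].

Lemma conjM_refl : reflexive conjM.
Proof. by move=> a; apply/existsP; exists 1%g; rewrite actM1. Qed.

Lemma conjM_sym : symmetric conjM.
Proof.
suff sym a b : conjM a b -> conjM b a by move=> a b; apply/idP/idP; apply: sym.
case/existsP => s /eqP <-; apply/existsP; exists s^-1%g.
by rewrite actMM mulVg actM1.
Qed.

Lemma conjM_trans : transitive conjM.
Proof.
move=> b a c /existsP [s /eqP <-] /existsP [t /eqP <-].
by apply/existsP; exists (t * s)%g; rewrite actMM.
Qed.

Lemma conjM_act (s : 'S_d) mu : conjM mu (actM s mu).
Proof. by apply/existsP; exists s. Qed.

Lemma conjM_wt a b (s : 'S_d) :
  (forall i j : 'I_d, wt b i j = wt a (s i) (s j)) -> conjM a b.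
Proof. by move=> h; apply/existsP; exists s; apply/eqP/eq_wt => i j; rewrite wt_act h. Qed.

Lemma conjM_class_rep mu : conjM mu (class_rep conjM mu).
Proof. exact: class_repP conjM_refl mu. Qed.

Lemma class_repM_eq a b : conjM a b -> class_rep conjM a = class_rep conjM b.
Proof. by move=> h; rewrite (class_rep_eq conjM_refl conjM_sym conjM_trans h). Qed.

Lemma class_repMK mu : mu \in class_reps conjM -> class_rep conjM mu = mu.
Proof. by move=> h; rewrite (class_repK conjM_refl conjM_sym conjM_trans h). Qed.

(* X_ii is counted twice, so that the row degrees add up to twice the degree. *)
Definition rowdeg mu (i : nat) : nat := \sum_(0 <= j < d) wt mu i j + wt mu i i.

Lemma sum_wt mu :
  \sum_(0 <= i < d) \sum_(0 <= j < d) wt mu i j + \sum_(0 <= i < d) wt mu i i = 2 * degM mu.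
Proof.
rewrite /degM; under [in RHS]eq_bigr do rewrite -[k in val mu k]utK -wt_ord.
rewrite (double_sum_UT (V := fun i j : 'I_d => wt mu i j)); last by move=> i j; rewrite wtC.
by rewrite !big_mkord; under eq_bigr do rewrite big_mkord.
Qed.

Lemma sum_rowdeg mu : \sum_(0 <= i < d) rowdeg mu i = 2 * degM mu.
Proof. by rewrite -sum_wt -big_split. Qed.

Lemma rowdeg_out mu i : d <= i -> rowdeg mu i = 0.
Proof.
by move=> h; rewrite /rowdeg wt_out ?h // addn0 big1 // => j _; rewrite wt_out ?h.
Qed.

Lemma wt_le_rowdeg mu i j : wt mu i j <= rowdeg mu i.
Proof.
case: (ltnP j d) => hj; last by rewrite wt_out ?hj ?orbT.
exact: leq_trans (leq_sum_nat_term (wt mu i) hj) (leq_addr _ _).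
Qed.

Lemma rowdeg0_wt mu i j : rowdeg mu i = 0 -> wt mu i j = 0 /\ wt mu j i = 0.
Proof.
by move=> h; have := wt_le_rowdeg mu i j; rewrite h leqn0 wtC => /eqP.
Qed.

Lemma rowdeg_le mu i : rowdeg mu i <= 2 * degM mu.
Proof.
case: (ltnP i d) => hi; last by rewrite rowdeg_out.
by rewrite -sum_rowdeg; apply: leq_sum_nat_term.
Qed.

Lemma rowdeg_act (s : 'S_d) mu (i : 'I_d) : rowdeg (actM s mu) i = rowdeg mu (s i).
Proof.
rewrite /rowdeg wt_act !big_mkord (reindex_inj (@perm_inj _ s^-1%g)) /=.
by congr (_ + _); apply: eq_bigr => j _; rewrite wt_act permKV.
Qed.

Lemma rowdeg_act_nat (s : 'S_d) mu i : rowdeg (actM s mu) i = rowdeg mu (permn s i).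
Proof.
case: (ltnP i d) => hi; last by rewrite (permn_out s hi) !rowdeg_out.
by rewrite -[i]/(val (Ordinal hi)) permn_ord rowdeg_act.
Qed.

Lemma zeroM_proof : \sum_(k : UT d) (([ffun=> ord0] : {ffun UT d -> 'I_m.+1}) k : nat) <= m.
Proof. by rewrite big1 // => k _; rewrite ffunE. Qed.

Definition zeroM : Mon d m :=
  exist (fun f : {ffun UT d -> 'I_m.+1} => \sum_k (f k : nat) <= m) _ zeroM_proof.

(* The junk value zeroM is taken when the weights V have degree > m. *)
Definition monM (V : nat -> nat -> nat) : Mon d m :=
  insubd zeroM [ffun k : UT d => inord (V (val k).1 (val k).2)].

Lemma wt_monM (V : nat -> nat -> nat) :
  (forall i j, V i j = V j i) -> (forall i j, V i j <= m) ->
  \sum_(0 <= i < d) \sum_(0 <= j < d) V i j + \sum_(0 <= i < d) V i i <= 2 * m ->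
  forall i j, wt (monM V) i j = if (i < d) && (j < d) then V i j else 0.
Proof.
move=> VC Vm Vsum; rewrite /monM; set f := [ffun k : UT d => _].
have fE (i j : 'I_d) : f (ut i j) = V i j :> nat.
  by rewrite ffunE inordK ?ltnS //=; case: ifP => // _; rewrite VC.
have f_ok : \sum_(k : UT d) (f k : nat) <= m.
  rewrite -(leq_pmul2l (isT : 0 < 2)).
  under eq_bigr do rewrite -[k in f k]utK.
  rewrite (double_sum_UT (V := fun i j => (f (ut i j) : nat))); last first.
    by move=> i j; rewrite utC.
  move: Vsum; rewrite !big_mkord; under eq_bigr do rewrite big_mkord.
  by under eq_bigr do under eq_bigr do rewrite -fE; under [X in _ + X]eq_bigr do rewrite -fE.
move=> i j; case: (ltnP i d) => hi; case: (ltnP j d) => hj /=;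
  try by rewrite wt_out ?hi ?hj ?orbT.
by rewrite -[i]/(val (Ordinal hi)) -[j]/(val (Ordinal hj)) wt_ord insubdK.
Qed.

End Monomials.

(** * Independence of the dimension *)

Section Sorting.
Variables d m : nat.
Implicit Types mu : Mon d m.

Definition sortedM mu : bool :=
  [forall i : 'I_d, forall j : 'I_d, (i <= j) ==> (rowdeg mu j <= rowdeg mu i)].

Lemma sortedMP mu : sortedM mu -> forall i j, i <= j -> rowdeg mu j <= rowdeg mu i.
Proof.
move=> /forallP h i j hij; case: (ltnP j d) => hj; last by rewrite rowdeg_out.
have hi : i < d by apply: leq_ltn_trans hij hj.
by have /forallP/(_ (Ordinal hj))/implyP := h (Ordinal hi); apply.
Qed.

Lemma exists_sorted_act mu : exists s : 'S_d, sortedM (actM s mu).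
Proof.
pose leT (i j : 'I_d) := rowdeg mu j <= rowdeg mu i.
have leT_total : total leT by move=> i j; apply: leq_total.
have leT_trans : transitive leT by move=> j i k h1 h2; apply: leq_trans h2 h1.
have /tuple_permP [p hp] : perm_eq (sort leT (enum 'I_d)) (ord_tuple d).
  by rewrite perm_sort.
have := sort_sorted leT_total (enum 'I_d); rewrite hp => srt.
exists p; apply/forallP => i; apply/forallP => j; apply/implyP => hij.
rewrite !rowdeg_act.
have := sorted_leq_nth leT_trans (fun i => leqnn _) i srt i j.
rewrite !inE size_tuple !ltn_ord => /(_ isT isT hij).
rewrite /= !(nth_map i) -?enumT ?size_enum_ord //.
by rewrite !nth_ord_enum !tnth_ord_tuple.
Qed.

Definition sortM mu : Mon d m :=
  actM (odflt 1%g [pick s : 'S_d | sortedM (actM s mu)]) mu.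

Lemma sortM_sorted mu : sortedM (sortM mu).
Proof.
rewrite /sortM; case: pickP => [s //|none].
by have [s] := exists_sorted_act mu; rewrite none.
Qed.

Lemma conjM_sortM mu : conjM mu (sortM mu).
Proof. exact: conjM_act. Qed.

Definition nsupp mu : nat := \sum_(0 <= j < d) (0 < rowdeg mu j).

Lemma nsupp_act (s : 'S_d) mu : nsupp (actM s mu) = nsupp mu.
Proof.
rewrite /nsupp !big_mkord (reindex_inj (@perm_inj _ s^-1%g)) /=.
by apply: eq_bigr => i _; rewrite rowdeg_act permKV.
Qed.

Lemma nsupp_le_d mu : nsupp mu <= d.
Proof.
rewrite -[d in _ <= d]subn0 -[d - 0]muln1 -sum_nat_const_nat.
by apply: leq_sum => i _; apply: leq_b1.
Qed.

Lemma nsupp_le mu : nsupp mu <= 2 * degM mu.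
Proof. by rewrite -sum_rowdeg; apply: leq_sum => i _; case: (rowdeg mu i). Qed.

Lemma nsupp_le_2m mu : nsupp mu <= 2 * m.
Proof. by apply: leq_trans (nsupp_le mu) _; rewrite leq_mul2l degM_le orbT. Qed.

Lemma sorted_rowdeg_gt0 mu : sortedM mu -> forall i, (0 < rowdeg mu i) = (i < nsupp mu).
Proof.
move=> /sortedMP hs; apply: downward_closed_count => [i j hij|i hi].
  by move=> hj; apply: leq_trans hj (hs _ _ hij).
by rewrite rowdeg_out.
Qed.

Lemma sorted_rowdeg_eq0 mu i : sortedM mu -> nsupp mu <= i -> rowdeg mu i = 0.
Proof. by move=> /sorted_rowdeg_gt0 h; rewrite leqNgt -h lt0n negbK => /eqP. Qed.

Lemma sorted_wt_eq0 mu i j : sortedM mu -> (nsupp mu <= i) || (nsupp mu <= j) ->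
  wt mu i j = 0.
Proof.
move=> hs /orP [h|h]; first by case: (rowdeg0_wt j (sorted_rowdeg_eq0 hs h)).
by case: (rowdeg0_wt i (sorted_rowdeg_eq0 hs h)).
Qed.

End Sorting.

Lemma conjM_of_prefix_map d m (a b : Mon d m) l (f : nat -> nat) : l <= d ->
  (forall i, i < l -> f i < l) -> {in [pred i | i < l] &, injective f} ->
  (forall i j, (l <= i) || (l <= j) -> wt a i j = 0) ->
  (forall i j, (l <= i) || (l <= j) -> wt b i j = 0) ->
  (forall i j, i < l -> j < l -> wt b i j = wt a (f i) (f j)) -> conjM a b.
Proof.
move=> hl hf finj a0 b0 hab; have [s hs] := perm_of_prefix_map hl hf finj.
apply: (conjM_wt (s := s)) => i j; rewrite !hs.
case: (ltnP i l) => hi; last by rewrite a0 ?b0 ?hi.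
case: (ltnP j l) => hj; last by rewrite a0 ?b0 ?hj ?orbT.
exact: hab.
Qed.

Section Extension.
Variables n d m : nat.
Hypothesis n_le_d : n <= d.
Implicit Types a b : Mon n m.

Definition extM a : Mon d m := monM d m (wt a).

Lemma wt_extM a i j : wt (extM a) i j = wt a i j.
Proof.
rewrite wt_monM; [|exact: wtC|exact: wt_le|]; last first.
  rewrite (double_sum_nat_trunc n_le_d) => [|i' j' h]; last by rewrite wt_out.
  by rewrite sum_wt leq_mul2l degM_le orbT.
case: ifP => // /negbT; rewrite negb_and -!leqNgt => h.
by rewrite wt_out //; case/orP: h => h; rewrite (leq_trans n_le_d h) ?orbT.
Qed.

Lemma rowdeg_extM a i : rowdeg (extM a) i = rowdeg a i.
Proof.
rewrite /rowdeg wt_extM (sum_nat_trunc n_le_d) => [|j hj]; last first.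
  by rewrite wt_extM wt_out ?hj ?orbT.
by under eq_bigr do rewrite wt_extM.
Qed.

Lemma nsupp_extM a : nsupp (extM a) = nsupp a.
Proof.
rewrite /nsupp (sum_nat_trunc n_le_d) => [|i hi]; last by rewrite rowdeg_extM rowdeg_out.
by under eq_bigr do rewrite rowdeg_extM.
Qed.

Definition resM (mu : Mon d m) : Mon n m := monM n m (wt mu).

Lemma extM_resM (mu : Mon d m) : (forall i j, (n <= i) || (n <= j) -> wt mu i j = 0) ->
  extM (resM mu) = mu.
Proof.
move=> mu0; apply: eq_wt => i j; rewrite wt_extM wt_monM; [|exact: wtC|exact: wt_le|].
  by case: ifP => // /negbT; rewrite negb_and -!leqNgt => /mu0.
by rewrite -(double_sum_nat_trunc n_le_d mu0) sum_wt leq_mul2l degM_le orbT.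
Qed.

Lemma conjM_extM a b : conjM a b -> conjM (extM a) (extM b).
Proof.
case/existsP => s /eqP <-.
apply: (conjM_of_prefix_map (f := permn s) n_le_d) => [i hi|i j _ _|i j|i j|i j _ _].
- by rewrite permn_lt.
- exact: permn_inj.
- by rewrite wt_extM; apply: wt_out.
- by rewrite wt_extM; apply: wt_out.
- by rewrite !wt_extM wt_act_nat.
Qed.

Hypothesis two_m_le_n : 2 * m <= n.

(* A sorted monomial only involves the first nsupp <= 2m <= n indices, so a
   conjugation in dimension d can be replaced by one that permutes these. *)
Lemma sorted_conjM_extM a b :
  sortedM a -> sortedM b -> conjM (extM a) (extM b) -> conjM a b.
Proof.
move=> sa sb /existsP [s /eqP hs].
have nsuppE : nsupp b = nsupp a by rewrite -(nsupp_extM a) -(nsupp_extM b) -hs nsupp_act.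
have rowdegE i : rowdeg b i = rowdeg a (permn s i).
  by rewrite -rowdeg_extM -(rowdeg_extM a) -hs rowdeg_act_nat.
apply: (conjM_of_prefix_map (l := nsupp a) (f := permn s)).
- exact: leq_trans (nsupp_le_2m a) two_m_le_n.
- by move=> i hi; rewrite -(sorted_rowdeg_gt0 sa) -rowdegE (sorted_rowdeg_gt0 sb) nsuppE.
- by move=> i j _ _; apply: permn_inj.
- by move=> i j; apply: sorted_wt_eq0.
- by rewrite -nsuppE => i j; apply: sorted_wt_eq0.
- by move=> i j _ _; rewrite -wt_extM -(wt_extM a) -hs wt_act_nat.
Qed.

Lemma card_class_reps_extM : #|class_reps (@conjM n m)| = #|class_reps (@conjM d m)|.
Proof.
apply: (card_class_reps_eq (F := extM));
  try solve [exact: conjM_refl | exact: conjM_sym | exact: conjM_trans].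
  move=> a b; apply/idP/idP => [|hab]; first exact: conjM_extM.
  apply: (@conjM_trans _ _ (sortM a)); first exact: conjM_sortM.
  apply: (@conjM_trans _ _ (sortM b)); last by rewrite conjM_sym conjM_sortM.
  apply: sorted_conjM_extM; rewrite ?sortM_sorted //.
  apply: (@conjM_trans _ _ (extM a)); first by rewrite conjM_sym conjM_extM ?conjM_sortM.
  by apply: (@conjM_trans _ _ (extM b)) => //; rewrite conjM_extM ?conjM_sortM.
move=> mu; exists (resM (sortM mu)).
rewrite extM_resM ?conjM_sortM // => i j h; apply: sorted_wt_eq0 (sortM_sorted mu) _.
by case/orP: h => h; apply/orP; [left|right]; apply: leq_trans h;
   apply: leq_trans (nsupp_le_2m _) two_m_le_n.
Qed.

End Extension.

(** * Counting the orbits *)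

Section Profile.
Variables d m : nat.
Implicit Types mu nu : Mon d m.

Definition profile mu : seq nat := [seq rowdeg mu i | i <- iota 0 (nsupp mu)].

Lemma profile_partition mu : sortedM mu -> is_partition (2 * degM mu) (profile mu).
Proof.
move=> hs; apply/and3P; split.
- apply: (homo_sorted (e := ltn)); last exact: iota_ltn_sorted.
  by move=> i j /ltnW; apply: sortedMP.
- by apply/allP => x /mapP [i]; rewrite mem_iota => /andP [_ hi] ->; rewrite sorted_rowdeg_gt0.
- rewrite sumnE big_map -sum_rowdeg (sum_nat_trunc (nsupp_le_d mu)) => [|i]; last first.
    exact: sorted_rowdeg_eq0.
  by rewrite /index_iota subn0.
Qed.

Lemma map_inord_rowdeg mu N l : 2 * degM mu <= N ->
  [seq ([ffun i : 'I_l => inord (rowdeg mu i) : 'I_N.+1] i : nat) | i <- enum 'I_l] =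
  [seq rowdeg mu i | i <- iota 0 l].
Proof.
move=> hN; rewrite -val_enum_ord -map_comp; apply: eq_map => i /=.
by rewrite ffunE inordK // ltnS (leq_trans (rowdeg_le _ _)).
Qed.

Lemma wt_diag_le_rowdeg mu i k : wt mu i k + (i == k) * wt mu i i <= rowdeg mu i.
Proof.
case: eqP => [<-|_]; last by rewrite addn0 wt_le_rowdeg.
case: (ltnP i d) => hi; last by rewrite !wt_out ?hi.
by rewrite mul1n leq_add2r leq_sum_nat_term.
Qed.

(* W + diag W: symmetric, with the row degrees of mu as row sums. *)
Definition wtmx mu l N : 'M['I_N.+1]_l :=
  \matrix_(i, k) inord (wt mu i k + (i == k :> nat) * wt mu i i).

Lemma wtmxE mu l N i k : 2 * degM mu <= N ->
  (wtmx mu l N i k : nat) = wt mu i k + (i == k :> nat) * wt mu i i.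
Proof.
move=> hN; rewrite mxE inordK // ltnS.
exact: leq_trans (wt_diag_le_rowdeg _ _ _) (leq_trans (rowdeg_le _ _) hN).
Qed.

Lemma wtmx_sym mu l N : ((wtmx mu l N)^T)%R = wtmx mu l N.
Proof. by apply/matrixP => i k; rewrite !mxE wtC eq_sym; case: eqP => [->|]. Qed.

Lemma wtmx_rowsum mu l N (i : 'I_l) : sortedM mu -> nsupp mu <= l -> 2 * degM mu <= N ->
  \sum_k (wtmx mu l N i k : nat) = rowdeg mu i.
Proof.
move=> hs hl hN; under eq_bigr do rewrite wtmxE //.
rewrite big_split /= [X in _ + X](bigD1 i) //= eqxx mul1n.
rewrite [X in _ + (_ + X)]big1 ?addn0 => [|k hk]; last first.
  by rewrite val_eqE eq_sym (negbTE hk).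
rewrite -(big_mkord xpredT (wt mu i)).
have wt0 k : nsupp mu <= k -> wt mu i k = 0.
  by move=> hk; rewrite (sorted_wt_eq0 hs) ?hk ?orbT.
by rewrite /rowdeg (sum_nat_trunc hl wt0) (sum_nat_trunc (nsupp_le_d mu) wt0).
Qed.

Lemma wtmx_inj mu nu l N : sortedM mu -> sortedM nu ->
  nsupp mu <= l -> nsupp nu <= l -> 2 * degM mu <= N -> 2 * degM nu <= N ->
  wtmx mu l N = wtmx nu l N -> mu = nu.
Proof.
move=> smu snu lmu lnu Nmu Nnu e; apply: eq_wt => i j.
have out k : l <= k -> (nsupp mu <= k) && (nsupp nu <= k).
  by move=> hk; rewrite (leq_trans lmu hk) (leq_trans lnu hk).
case: (ltnP i l) => [hi|/out /andP [hmu hnu]]; last first.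
  by rewrite !sorted_wt_eq0 ?hmu ?hnu.
case: (ltnP j l) => [hj|/out /andP [hmu hnu]]; last first.
  by rewrite !sorted_wt_eq0 ?hmu ?hnu ?orbT.
have entry (p q : 'I_l) := congr1 (fun A : 'M['I_N.+1]_l => A p q : nat) e.
move: (entry (Ordinal hi) (Ordinal hj)) (entry (Ordinal hi) (Ordinal hi)).
rewrite /= !wtmxE //= eqxx mul1n.
by case: (eqVneq (i : nat) j) => [->|_]; [lia | rewrite !addn0].
Qed.

Lemma card_profile_le (a : seq nat) :
  #|[set r in class_reps (@conjM d m) | profile (sortM r) == a]| <= q_alpha a.
Proof.
set P := [set r in _ | _].
have facts r : r \in P -> [/\ r \in class_reps (@conjM d m), a = profile (sortM r),
    nsupp (sortM r) = size a & 2 * degM (sortM r) = sumn a].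
  rewrite inE => /andP [hr /eqP <-]; split; rewrite ?size_map ?size_iota //.
  by have /and3P [_ _ /eqP ->] := profile_partition (sortM_sorted r).
pose phi r := wtmx (sortM r) (size a) (sumn a).
rewrite -(card_in_imset (f := phi)) => [|r1 r2 /facts [h1 _ l1 N1] /facts [h2 _ l2 N2] e].
  apply/subset_leq_card/subsetP => _ /imsetP [r /facts [hr ha lr Nr] ->].
  rewrite inE wtmx_sym eqxx /=; apply/forallP => i.
  by rewrite wtmx_rowsum ?sortM_sorted ?lr ?Nr // {2}ha (nth_map 0) ?nth_iota ?size_iota ?lr.
have es : sortM r1 = sortM r2.
  by apply: (wtmx_inj _ _ _ _ _ _ e); rewrite ?sortM_sorted ?l1 ?l2 ?N1 ?N2.
rewrite -(class_repMK h1) -(class_repMK h2); apply: class_repM_eq.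
by apply: (@conjM_trans _ _ (sortM r1)); rewrite ?conjM_sortM // es conjM_sym conjM_sortM.
Qed.

End Profile.

Lemma card_class_reps_le d m :
  #|class_reps (@conjM d m)| <= \sum_(j < m.+1) sum_q (2 * j).
Proof.
rewrite -sum1_card (partition_big (fun r => inord (degM (sortM r)) : 'I_m.+1) xpredT) //=.
apply: leq_sum => j _; rewrite /sum_q.
rewrite (partition_big (fun r => inord (nsupp (sortM r)) : 'I_(2 * j).+1) xpredT) //=.
apply: leq_sum => l _.
have fiber (r : Mon d m) : (r \in class_reps (@conjM d m)) && (inord (degM (sortM r)) == j)
    && (inord (nsupp (sortM r)) == l) -> degM (sortM r) = j /\ nsupp (sortM r) = l.
  rewrite eq_inord ?degM_le // => /andP [/andP [_ /eqP hj]].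
  by rewrite eq_inord -?hj ?nsupp_le // => /eqP.
pose prof (r : Mon d m) : {ffun 'I_l -> 'I_(2 * j).+1} :=
  [ffun i : 'I_l => inord (rowdeg (sortM r) i)].
have profE (r : Mon d m) : degM (sortM r) = j -> nsupp (sortM r) = l ->
    [seq (prof r i : nat) | i <- enum 'I_l] = profile (sortM r).
  by move=> hj hl; rewrite map_inord_rowdeg ?hj // /profile hl.
rewrite (partition_big prof
          (fun t => is_partition (2 * j) [seq (t i : nat) | i <- enum 'I_l]))
  => [|r /fiber [hj hl]]; last by rewrite profE // -hj profile_partition ?sortM_sorted.
apply: leq_sum => t _; rewrite sum1dep_card.
apply: leq_trans (card_profile_le d m [seq (t i : nat) | i <- enum 'I_l]).
apply/subset_leq_card/subsetP => r; rewrite !inE => /andP [hr /eqP <-].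
have [hj hl] := fiber r hr; case/andP: hr => /andP [hr _] _.
by rewrite hr profE ?eqxx.
Qed.

(** * Invariant polynomials *)

Local Open Scope ring_scope.

Lemma perm_mx_conj_entry (R : pzRingType) d (s : 'S_d) (X : 'M[R]_d) i j :
  (perm_mx s *m X *m (perm_mx s)^T) i j = X (s i) (s j).
Proof. by rewrite tr_perm_mx -row_permE -(col_permE s) !mxE. Qed.

Section Evaluation.
Variables (R : realFieldType) (d m : nat).
Implicit Types (mu : Mon d m) (c : PolyV R d m) (X : 'M[R]_d).

Definition monX mu X : R := \prod_(k : UT d) X (val k).1 (val k).2 ^+ (val mu k : nat).

Lemma polyEvalE c X : polyEval c X = \sum_mu c mu * monX mu X.
Proof. by []. Qed.

Lemma polyEvalB c1 c2 X : polyEval (c1 - c2) X = polyEval c1 X - polyEval c2 X.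
Proof. by rewrite !polyEvalE -sumrB; apply: eq_bigr => mu _; rewrite !ffunE mulrBl. Qed.

Lemma polyEval_conj c (s : 'S_d) X : X^T = X ->
  polyEval c (perm_mx s *m X *m (perm_mx s)^T) = polyEval [ffun nu => c (actM s nu)] X.
Proof.
move=> XT; rewrite !polyEvalE (reindex_inj (@actM_inj d m s)).
apply: eq_bigr => nu _; rewrite ffunE /monX [in RHS](reindex_inj (@actUT_inj d s)).
congr (_ * _); apply: eq_bigr => k _; rewrite perm_mx_conj_entry /= ffunE /=.
by case: ifP => // _; rewrite -[in RHS]XT mxE.
Qed.

(* Kronecker substitution X_ij = t ^ (m+1)^(rank of ij): the exponents of mu,
   all <= m, are the base-(m+1) digits of kexp mu. *)
Definition kexp mu : nat := (\sum_(k : UT d) (val mu k : nat) * m.+1 ^ enum_rank k)%N.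

Lemma kexp_inj : injective kexp.
Proof.
have kexpE mu : kexp mu = (\sum_(i < #|{: UT d}|) val mu (enum_val i) * m.+1 ^ i)%N.
  rewrite /kexp (reindex (fun i : 'I_#|{: UT d}| => enum_val i)) /=; last first.
    by exists enum_rank => x _; [exact: enum_valK | exact: enum_rankK].
  by apply: eq_bigr => i _; rewrite enum_valK.
move=> mu nu; rewrite !kexpE => e; apply/val_inj/ffunP => k; apply: val_inj.
by rewrite -(enum_rankK k); apply: (eq_digits _ _ e) => i; apply: ltn_ord.
Qed.

Definition kmx (t : R) : 'M[R]_d := \matrix_(i, j) t ^+ (m.+1 ^ enum_rank (ut i j))%N.

Lemma kmx_sym t : (kmx t)^T = kmx t.
Proof. by apply/matrixP => i j; rewrite !mxE utC. Qed.

Lemma monX_kmx mu t : monX mu (kmx t) = t ^+ kexp mu.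
Proof.
rewrite /monX /kexp.
apply: (big_ind2 (fun (a : R) n => a = t ^+ n)) => [|x1 x2 n1 n2 -> ->|k _].
- by rewrite expr0.
- by rewrite exprD.
by rewrite mxE utK -exprM mulnC.
Qed.

Lemma polyEval_eq0 c : (forall X, X^T = X -> polyEval c X = 0) -> c = 0.
Proof.
move=> c0; pose p : {poly R} := \sum_mu c mu *: 'X^(kexp mu).
have p0 : p = 0.
  apply/eqP; apply: contraT => pn0.
  have /max_poly_roots : all (root p) [seq i%:R | i <- iota 0 (size p)].
    apply/allP => _ /mapP [i _ ->]; rewrite /root -(c0 _ (kmx_sym i%:R)) polyEvalE.
    rewrite /p horner_sum; apply/eqP/eq_bigr => mu _.
    by rewrite hornerZ hornerXn monX_kmx.
  rewrite size_map size_iota ltnn map_inj_uniq ?iota_uniq // => [/(_ pn0 isT)//|i j].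
  by move/eqP; rewrite eqr_nat => /eqP.
apply/ffunP => mu; have := congr1 (fun q : {poly R} => q`_(kexp mu)) p0.
rewrite coef0 /p coef_sum (bigD1 mu) //= coefZ coefXn eqxx mulr1 big1 ?addr0 ?ffunE //.
by move=> nu hnu; rewrite coefZ coefXn (inj_eq kexp_inj) eq_sym (negbTE hnu) mulr0.
Qed.

Lemma Sd_invariantE c : Sd_invariant c <-> forall mu, c mu = c (class_rep (@conjM d m) mu).
Proof.
split=> [inv mu|crep s X XT]; last first.
  rewrite polyEval_conj //; congr polyEval; apply/ffunP => nu.
  by rewrite ffunE crep [in RHS]crep (class_repM_eq (conjM_act s nu)).
have inv_act s nu : c (actM s nu) = c nu.
  have /(_ _)/eqP := @polyEval_eq0 ([ffun nu => c (actM s nu)] - c).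
  rewrite subr_eq0 => /(_ _)/eqP/ffunP/(_ nu); rewrite ffunE; apply => X XT.
  by rewrite polyEvalB -polyEval_conj // inv // subrr.
by have /existsP [s /eqP <-] := conjM_class_rep mu; rewrite inv_act.
Qed.

End Evaluation.

Lemma scale_regular (R : pzRingType) (a b : R) : a *: (b : R^o) = a * b.
Proof. by []. Qed.

Section Dimension.
Variables (R : realFieldType) (d m : nat).

Definition orbit_ind (r : Mon d m) : PolyV R d m :=
  [ffun mu => (class_rep (@conjM d m) mu == r)%:R].

Lemma orbit_ind_rep r mu : orbit_ind r (class_rep (@conjM d m) mu) = orbit_ind r mu.
Proof. by rewrite !ffunE class_repMK ?class_rep_in. Qed.

Lemma dim_Sd_invariant : dimIs (@Sd_invariant R d m) #|class_reps (@conjM d m)|.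
Proof.
set reps := class_reps _; set X := [seq orbit_ind r | r <- enum reps].
have sizeX : size X = size (enum reps) by rewrite size_map.
exists <<X>>%VS; split=> [c|].
  rewrite Sd_invariantE; split=> [cX mu|crep].
    rewrite (coord_span (X := in_tuple X) cX) !sum_ffunE; apply: eq_bigr => i _.
    by rewrite !ffunE /X /= (nth_map (zeroM d m)) ?orbit_ind_rep // -sizeX.
  have -> : c = \sum_(r in reps) c r *: orbit_ind r.
    apply/ffunP => mu; rewrite sum_ffunE (bigD1 (class_rep (@conjM d m) mu)) ?class_rep_in //=.
    rewrite big1 => [|r /andP [_ hr]]; last first.
      by rewrite !ffunE eq_sym (negbTE hr) scale_regular mulr0.
    by rewrite !ffunE eqxx scale_regular mulr1 addr0 -crep.
  apply: memv_suml => r hr; apply/memvZ/memv_span/map_f.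
  by rewrite mem_enum.
suff /eqP -> : free X by rewrite sizeX -cardE.
apply/(@freeP _ _ _ (in_tuple X)) => k hk i.
have hi : (i < size (enum reps))%N by rewrite -sizeX.
set r := nth (zeroM d m) (enum reps) i.
have rR : r \in reps by rewrite -mem_enum mem_nth.
move: (congr1 (fun f : PolyV R d m => f r) hk).
rewrite sum_ffunE ffunE (bigD1 i) //= big1 ?addr0 => [|j hj].
  by rewrite ffunE (nth_map (zeroM d m)) // ffunE class_repMK // eqxx scale_regular mulr1.
rewrite ffunE (nth_map (zeroM d m)) -?sizeX // ffunE class_repMK //.
rewrite (nth_uniq _ hi) ?enum_uniq -?sizeX // scale_regular.
by case: eqP => [/val_inj e|_]; [rewrite e eqxx in hj | rewrite mulr0].
Qed.

End Dimension.

Close Scope ring_scope.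

Theorem mainTheorem7 (R : realFieldType) (m : nat) :
  exists D : nat,
    (forall d : nat, (2 * m <= d)%N ->
       dimIs (@Sd_invariant R d m) D) /\
    (D <= \sum_(j < m.+1) sum_q (2 * j))%N.
Proof.
exists #|class_reps (@conjM (2 * m) m)|; split; last exact: card_class_reps_le.
by move=> d hd; rewrite (card_class_reps_extM hd) //; apply: dim_Sd_invariant.
Qed.
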